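(* The group of units (invertible elements) of the monoid $SB_n$ is equal to the image of the braid group $Br_n$ in $SB_n$, i.e. to the submonoid of $SB_n$ generated by $\sigma_1^{\pm1},\dots,\sigma_{n-1}^{\pm1}$.
   Context: Fix $n\ge 2$. $SB_n$ is the monoid with generators $\sigma_i,\sigma_i^{-1},x_i$ ($i=1,\dots,n-1$) and relations: $\sigma_i\sigma_j=\sigma_j\sigma_i$ and $x_ix_j=x_jx_i$ if $|i-j|>1$; $x_i\sigma_j=\sigma_jx_i$ if $|i-j|\ne1$; $\sigma_i\sigma_{i+1}\sigma_i=\sigma_{i+1}\sigma_i\sigma_{i+1}$; $\sigma_i\sigma_{i+1}x_i=x_{i+1}\sigma_i\sigma_{i+1}$; $\sigma_{i+1}\sigma_ix_{i+1}=x_i\sigma_{i+1}\sigma_i$; $\sigma_i\sigma_i^{-1}=\sigma_i^{-1}\sigma_i=1$. The braid group $Br_n$ (generators $\sigma_i$, Artin relations) maps to $SB_n$ by $\sigma_i\mapsto\sigma_i$. *)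

(* The monoid SB_n given by generators and relations,
   realised as words modulo the congruence generated by the relations. *)
From mathcomp Require Import all_boot.
Set Implicit Arguments. Unset Strict Implicit. Unset Printing Implicit Defensive.

(* Generators sigma_i, sigma_i^{-1}, x_i for i = 1..n-1, indexed 0-based by
   'I_m with m = n - 1 (so ordinal k stands for index k+1). *)
Inductive sbgen (m : nat) : Type :=
| Sg of 'I_m
| Sgi of 'I_m
| Xg of 'I_m.

Definition sbword (m : nat) := seq (sbgen m).

Definition far (i j : nat) : bool := (i.+1 < j) || (j.+1 < i).
Definition not_adj (i j : nat) : bool := (i.+1 != j) && (j.+1 != i).

Inductive sbrel (m : nat) : sbword m -> sbword m -> Prop :=
| r_ss (i j : 'I_m) : far i j -> sbrel [:: Sg i; Sg j] [:: Sg j; Sg i]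
| r_xx (i j : 'I_m) : far i j -> sbrel [:: Xg i; Xg j] [:: Xg j; Xg i]
| r_xs (i j : 'I_m) : not_adj i j -> sbrel [:: Xg i; Sg j] [:: Sg j; Xg i]
| r_braid (i j : 'I_m) : val j = (val i).+1 ->
    sbrel [:: Sg i; Sg j; Sg i] [:: Sg j; Sg i; Sg j]
| r_ssx (i j : 'I_m) : val j = (val i).+1 ->
    sbrel [:: Sg i; Sg j; Xg i] [:: Xg j; Sg i; Sg j]
| r_ssx' (i j : 'I_m) : val j = (val i).+1 ->
    sbrel [:: Sg j; Sg i; Xg j] [:: Xg i; Sg j; Sg i]
| r_inv1 (i : 'I_m) : sbrel [:: Sg i; Sgi i] [::]
| r_inv2 (i : 'I_m) : sbrel [:: Sgi i; Sg i] [::].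

Inductive sbeq (m : nat) : sbword m -> sbword m -> Prop :=
| sbeq_refl w : sbeq w w
| sbeq_sym u v : sbeq u v -> sbeq v u
| sbeq_trans u v w : sbeq u v -> sbeq v w -> sbeq u w
| sbeq_step a b u v : sbrel u v -> sbeq (a ++ u ++ b) (a ++ v ++ b).

Definition sb_unit (m : nat) (w : sbword m) : Prop :=
  exists v : sbword m, sbeq (w ++ v) [::] /\ sbeq (v ++ w) [::].

Definition is_sigma_letter (m : nat) (g : sbgen m) : bool :=
  match g with Xg _ => false | _ => true end.

Definition in_braid_image (m : nat) (w : sbword m) : Prop :=
  exists w' : sbword m, all (@is_sigma_letter m) w' /\ sbeq w w'.

From mathcomp Require Import all_boot.
Set Implicit Arguments. Unset Strict Implicit. Unset Printing Implicit Defensive.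

(* Every defining relation has the same number of letters x_i on both sides,
   so this number is a monoid morphism SB_n -> N. If w v = 1 then w contains no
   x_i, i.e. w is already a word in the sigma_i^{+-1}. Conversely every
   sigma_i^{+-1} is a unit and units are closed under products. *)

Section SBMonoid.

Variable m : nat.
Implicit Types (u v w a b : sbword m) (g : sbgen m).

Lemma sbeq_ctx a b u v : sbeq u v -> sbeq (a ++ u ++ b) (a ++ v ++ b).
Proof.
elim=> [w | {}u {}v _ IH | {}u {}v w _ IHuv _ IHvw | a' b' {}u {}v uRv].
- exact: sbeq_refl.
- exact: sbeq_sym.
- exact: sbeq_trans IHuv IHvw.
- by have := sbeq_step (a ++ a') (b' ++ b) uRv; rewrite -!catA.
Qed.

Lemma sbeq_cat u u' v v' : sbeq u u' -> sbeq v v' -> sbeq (u ++ v) (u' ++ v').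
Proof.
move=> Eu Ev; apply: (@sbeq_trans _ _ (u' ++ v)).
- by have := sbeq_ctx [::] v Eu.
- by have := sbeq_ctx u' [::] Ev; rewrite !cats0.
Qed.

Definition count_x w := count (predC (@is_sigma_letter m)) w.

Lemma sbeq_count_x u v : sbeq u v -> count_x u = count_x v.
Proof.
elim=> [// | // | {}u {}v w _ -> _ -> // | a b {}u {}v uRv].
by rewrite /count_x !count_cat; case: uRv.
Qed.

Lemma count_x_eq0 w : (count_x w == 0) = all (@is_sigma_letter m) w.
Proof.
by rewrite -leqn0 leqNgt -has_count has_predC negbK.
Qed.

Lemma sb_unit_sbeq w w' : sbeq w w' -> sb_unit w' -> sb_unit w.
Proof.
move=> Eww' [v [wv1 vw1]]; exists v; split.
- exact: sbeq_trans (sbeq_cat Eww' (sbeq_refl v)) wv1.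
- exact: sbeq_trans (sbeq_cat (sbeq_refl v) Eww') vw1.
Qed.

Lemma sb_unit_cat u v : sb_unit u -> sb_unit v -> sb_unit (u ++ v).
Proof.
move=> [u' [uu' u'u]] [v' [vv' v'v]]; exists (v' ++ u'); split.
- rewrite -catA (catA v).
  exact: sbeq_trans (sbeq_cat (sbeq_refl u) (sbeq_cat vv' (sbeq_refl u'))) uu'.
- rewrite -catA (catA u').
  exact: sbeq_trans (sbeq_cat (sbeq_refl v') (sbeq_cat u'u (sbeq_refl v))) v'v.
Qed.

Lemma sb_unit_sigma_letter g : is_sigma_letter g -> sb_unit [:: g].
Proof.
have rel1 u v : sbrel u v -> sbeq u v by move/(sbeq_step [::] [::]); rewrite !cats0.
case: g => // i _.
- by exists [:: Sgi i]; split; apply: rel1; constructor.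
- by exists [:: Sg i]; split; apply: rel1; constructor.
Qed.

Lemma sb_unit_sigma_word w : all (@is_sigma_letter m) w -> sb_unit w.
Proof.
elim: w => [_ | g w IHw /andP [g_sigma w_sigma]].
- by exists [::]; split; apply: sbeq_refl.
- exact: (sb_unit_cat (sb_unit_sigma_letter g_sigma) (IHw w_sigma)).
Qed.

Lemma sbeq_rinv_sigma_word w v : sbeq (w ++ v) [::] -> all (@is_sigma_letter m) w.
Proof.
move/sbeq_count_x; rewrite /count_x count_cat /= => /eqP.
by rewrite addn_eq0 count_x_eq0 => /andP [].
Qed.

End SBMonoid.

Theorem proposition3p1 (n : nat) (hn : 2 <= n) (w : sbword n.-1) :
  sb_unit w <-> in_braid_image w.
Proof.
split.
- move=> [v [wv1 _]]; exists w; split; last exact: sbeq_refl.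
  exact: sbeq_rinv_sigma_word wv1.
- move=> [w' [w'_sigma Eww']].
  exact: sb_unit_sbeq Eww' (sb_unit_sigma_word w'_sigma).
Qed.
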